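(* Let $\mathcal U\subseteq M(\mathbb C)^g$ be a non-commutative domain and let $f:\mathcal U\to M(\mathbb C)^{\tilde g}$ be a free map. Suppose $X\in\mathcal U(n)$, $Y\in\mathcal U(m)$, $\Gamma$ is an $n\times m$ complex matrix, and $f(X)\Gamma=\Gamma f(Y)$. If $f[n+m]^{-1}\big(\{f(X)\oplus f(Y)\}\big)$ has compact closure in $\mathcal U(n+m)$, then $X\Gamma=\Gamma Y$.
   Context: $M_n(\mathbb C)^g$ denotes $g$-tuples $X=(X_1,\dots,X_g)$ of $n\times n$ complex matrices; $X\Gamma=(X_1\Gamma,\dots,X_g\Gamma)$, $\Gamma Y=(\Gamma Y_1,\dots,\Gamma Y_g)$, $U^*XU$ entrywise, $X\oplus Y=(X_1\oplus Y_1,\dots,X_g\oplus Y_g)$ (block diagonal). A non-commutative set $\mathcal U\subseteq M(\mathbb C)^g$ is a sequence $(\mathcal U(n))_n$, $\mathcal U(n)\subseteq M_n(\mathbb C)^g$, closed under simultaneous unitary similarity and under direct sums; it is a non-commutative domain if each $\mathcal U(n)$ is open and connected. A free map $f:\mathcal U\to M(\mathbb C)^{\tilde g}$ is a sequence of functions $f[n]:\mathcal U(n)\to M_n(\mathbb C)^{\tilde g}$ such that whenever $X\in\mathcal U(n)$, $Y\in\mathcal U(m)$, $\Gamma\in\mathbb C^{n\times m}$ with $X\Gamma=\Gamma Y$, then $f[n](X)\Gamma=\Gamma f[m](Y)$; one writes $f(X)=f[n](X)$. *)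

(* The field of complex numbers is modelled as R[i] = complex R for an
   arbitrary R : realType (mathcomp-real-closed's `complex`), equipped with
   its standard (norm) topology; M_n(C) carries the matrix topology and
   M_n(C)^g = {ptws 'I_g -> 'M_n} carries the product (= Euclidean) topology. *)
From HB Require Import structures.
From mathcomp Require Import all_boot all_order all_algebra.
From mathcomp Require Import sesquilinear spectral.
From mathcomp Require Import all_classical all_reals all_analysis.
From mathcomp Require Import complex.
Import numFieldNormedType.Exports.

Set Implicit Arguments.
Unset Strict Implicit.
Unset Printing Implicit Defensive.

Import Order.TTheory GRing.Theory Num.Theory.
Local Open Scope ring_scope.
Local Open Scope classical_set_scope.
Local Open Scope sesquilinear_scope.

(* standard topology on C = R[i] (the one induced by its norm) *)
HB.instance Definition _ (R : realType) := PseudoPointedMetric.copy R[i] (R[i])^o.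

Definition tup (R : realType) (g n : nat) := {ptws 'I_g -> 'M[R[i]]_n}.

Definition intertwines (R : realType) (g n m : nat)
  (X : tup R g n) (G : 'M[R[i]]_(n, m)) (Y : tup R g m) : Prop :=
  forall i : 'I_g, X i *m G = G *m Y i.

Definition uconj (R : realType) (g n : nat) (V : 'M[R[i]]_n) (X : tup R g n)
  : tup R g n := fun i => V ^t* *m X i *m V.

Definition dsum (R : realType) (g n m : nat) (X : tup R g n) (Y : tup R g m)
  : tup R g (n + m) := fun i => block_mx (X i) 0 0 (Y i).

Definition nc_set (R : realType) (g : nat) (U : forall n, set (tup R g n)) : Prop :=
  (forall n (X : tup R g n) (V : 'M[R[i]]_n),
      U n X -> V \is unitarymx -> U n (uconj V X)) /\
  (forall n m (X : tup R g n) (Y : tup R g m),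
      U n X -> U m Y -> U (n + m)%N (dsum X Y)).

Definition nc_domain (R : realType) (g : nat) (U : forall n, set (tup R g n)) : Prop :=
  nc_set U /\ (forall n, open (U n) /\ connected (U n)).

(* free map U -> M(C)^g' : f[n] is only relevant on U(n) *)
Definition free_map (R : realType) (g g' : nat) (U : forall n, set (tup R g n))
  (f : forall n, tup R g n -> tup R g' n) : Prop :=
  forall n m (X : tup R g n) (Y : tup R g m) (G : 'M[R[i]]_(n, m)),
    U n X -> U m Y -> intertwines X G Y -> intertwines (f n X) G (f m Y).

(* Put D := Gamma Y - X Gamma and, for real s, Z_s := [X, s D; 0, Y].  Z_s is
   intertwined with X by [1; 0] and with Y by [s Gamma; 1], so whenever Z_s lies
   in U, freeness and f(X) Gamma = Gamma f(Y) force f(Z_s) = f(X) (+) f(Y), i.e.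
   Z_s lies in the fiber S.  Hence {s | Z_s in U} is open and equal to the closed
   set {s | Z_s in closure S}; it contains 0, so by connectedness of the real
   line it is everything.  The upper right blocks s D then stay in a compact set
   for all real s, which forces D = 0. *)

From HB Require Import structures.
From mathcomp Require Import all_boot all_order all_algebra.
From mathcomp Require Import sesquilinear spectral.
From mathcomp Require Import all_classical all_reals all_analysis.
From mathcomp Require Import complex.
Import numFieldNormedType.Exports.

Set Implicit Arguments.
Unset Strict Implicit.
Unset Printing Implicit Defensive.
Import Order.TTheory GRing.Theory Num.Theory.
Local Open Scope ring_scope.
Local Open Scope classical_set_scope.

Section UpperBlockIntertwining.
Variables (K : comNzRingType) (n m : nat).

Lemma mul_ublock_col1 (A : 'M[K]_n) (B : 'M[K]_(n, m)) (D : 'M[K]_m) :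
  block_mx A B 0 D *m col_mx 1%:M 0 = col_mx 1%:M 0 *m A.
Proof.
by rewrite mul_block_col mul_col_mx !mulmx1 mul1mx !mulmx0 !mul0mx !addr0.
Qed.

Lemma mul_ublock_colZ (c : K) (A : 'M[K]_n) (G : 'M[K]_(n, m)) (D : 'M[K]_m) :
  block_mx A (c *: (G *m D - A *m G)) 0 D *m col_mx (c *: G) 1%:M
  = col_mx (c *: G) 1%:M *m D.
Proof.
rewrite mul_block_col mul_col_mx !mulmx1 mul1mx mul0mx add0r.
by congr col_mx; rewrite -scalemxAl -scalemxAr -scalerDr addrC subrK.
Qed.

Lemma intertwined_block_diag (F : 'M[K]_(n + m)) (A : 'M[K]_n) (D : 'M[K]_m)
    (c : K) (G : 'M[K]_(n, m)) :
  A *m G = G *m D ->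
  F *m col_mx 1%:M 0 = col_mx 1%:M 0 *m A ->
  F *m col_mx (c *: G) 1%:M = col_mx (c *: G) 1%:M *m D ->
  F = block_mx A 0 0 D.
Proof.
move=> AG_GD; rewrite -[F]submxK => left_part right_part.
move: left_part; rewrite mul_block_col mul_col_mx !mulmx1 !mulmx0 mul1mx.
rewrite mul0mx !addr0 => /eq_col_mx[ul dl]; rewrite ul dl in right_part *.
move: right_part; rewrite mul_block_col mul_col_mx !mulmx1 mul1mx mul0mx add0r.
move=> /eq_col_mx[+ ->]; rewrite -scalemxAl -scalemxAr AG_GD => /eqP.
by rewrite -subr_eq0 addrC addKr => /eqP ->.
Qed.

End UpperBlockIntertwining.

Section ComplexTopology.
Local Open Scope complex_scope.
Variable R : realType.

Lemma realc_continuous : continuous (fun t : R => t%:C : R[i]).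
Proof.
move=> t A /nbhs_ballP[e e0 eA]; apply/nbhs_ballP.
move: (e0); rewrite /= (@ltcE R 0 e) => /andP[/eqP eIm eRe].
have e_real : e = (complex.Re e)%:C by case: e eIm {e0 eRe eA} => a b /= ->.
exists (complex.Re e) => // s /= ts; apply: eA; rewrite e_real.
rewrite /ball /= -(rmorphB (real_complex R)) normc_def /= expr0n /= addr0.
by rewrite sqrtr_sqr ltcR.
Qed.

Lemma Re_continuous : continuous (fun z : R[i] => complex.Re z).
Proof.
move=> z A /nbhs_ballP[e e0 eA]; apply/nbhs_ballP.
exists e%:C => [|w /= zw]; first by rewrite /= ltcR.
apply: eA; rewrite /ball /=.
have ReB : complex.Re (z - w) = complex.Re z - complex.Re w.
  by case: z w {zw} => ? ? [] ? ?.
by rewrite -ReB -ltcR (le_lt_trans (normc_ge_Re _) zw).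
Qed.

Lemma Im_continuous : continuous (fun z : R[i] => complex.Im z).
Proof.
have -> : (fun z : R[i] => complex.Im z) = (fun z => complex.Re (z * - 'i)).
  by apply: funext => -[a b] /=; rewrite oppr0 mulr0 mulrN1 opprK add0r.
move=> z; apply: (@continuous_comp _ _ _ (fun z : R[i] => z * - 'i)).
  by apply: continuousM; [exact: cvg_id | exact: cst_continuous].
exact: Re_continuous.
Qed.

Lemma compact_real_line_eq0 (A : set R) (a : R) :
  compact A -> (forall s, A (s * a)) -> a = 0.
Proof.
move=> /compact_bounded[M [_ /(_ (M + 1)) Mbound]] Aline.
have {}Mbound x : A x -> `|x| <= M + 1 by apply: Mbound; rewrite ltrDl.
apply/eqP; apply: contraT => a0.
have := Mbound _ (Aline ((M + 2) / a)); rewrite divfK //.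
by move=> /(le_trans (ler_norm _)); rewrite lerD2l leNgt ltr1n.
Qed.

Lemma compact_complex_line_eq0 (A : set R[i]) (d : R[i]) :
  compact A -> (forall s : R, A (s%:C * d)) -> d = 0.
Proof.
move=> cA Aline.
have line_part (p : R[i] -> R) : continuous p ->
    (forall s : R, p (s%:C * d) = s * p d) -> p d = 0.
  move=> cp pZ; apply: (@compact_real_line_eq0 (p @` A)).
    by apply: continuous_compact => //; exact: continuous_subspaceT.
  by move=> s; rewrite -pZ; exact: imageP.
have Re0 : complex.Re d = 0.
  apply: (line_part); first exact: Re_continuous.
  by case: d {Aline line_part} => a b s /=; rewrite mul0r subr0.
have Im0 : complex.Im d = 0.
  apply: (line_part); first exact: Im_continuous.
  by case: d {Aline line_part Re0} => a b s /=; rewrite mul0r addr0.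
by case: d Re0 Im0 {Aline line_part} => a b /= -> ->.
Qed.

End ComplexTopology.

Lemma tup_continuous (R : realType) (T : topologicalType) (g n : nat)
    (F : T -> tup R g n) :
  (forall i, continuous (fun t => F t i)) -> continuous F.
Proof.
move=> Fi_cont t.
apply/(@pointwise_cvgP (discrete_topology 'I_g) 'M[R[i]]_n (F @ t) (F t)
  (fmap_filter _ _)) => i.
exact: Fi_cont.
Qed.

Lemma tup_entry_continuous (R : realType) (g n : nat) (i : 'I_g) (r c : 'I_n) :
  continuous (fun Z : tup R g n => Z i r c).
Proof.
move=> Z.
have Zi_cont : (fun W : tup R g n => W i) @ Z --> Z i.
  move: (@cvg_id _ (nbhs Z)).
  by move/(@pointwise_cvgP (discrete_topology 'I_g) 'M[R[i]]_n (nbhs Z) Z); apply.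
exact: continuous_comp Zi_cont (@coord_continuous R[i] n n r c (Z i)).
Qed.

Lemma connected_continuous_trapped (T S : topologicalType) (p : T -> S)
    (V C : set S) (t0 : T) :
  connected [set: T] -> continuous p -> open V -> closed C -> C `<=` V ->
  (forall t, V (p t) -> C (p t)) -> V (p t0) -> forall t, C (p t).
Proof.
move=> T_conn p_cont V_open C_closed CV VC Vt0.
have preimVC : p @^-1` V = p @^-1` C.
  by apply/seteqP; split=> t /=; [exact: VC | exact: CV].
have preimV : p @^-1` V = setT.
  apply: T_conn; first by exists t0.
    exists (p @^-1` V); last by rewrite setTI.
    by apply: open_comp => // t _; exact: p_cont.
  exists (p @^-1` C); last by rewrite setTI preimVC.
  by apply: preimage_closed => // t _; exact: p_cont.
by move=> t; rewrite -[C (p t)]/((p @^-1` C) t) -preimVC preimV.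
Qed.

Section Pencil.
Local Open Scope complex_scope.
Variables (R : realType) (g n m : nat).
Variables (X : tup R g n) (Y : tup R g m) (G : 'M[R[i]]_(n, m)).

Definition pencil_defect (i : 'I_g) : 'M[R[i]]_(n, m) := G *m Y i - X i *m G.

Definition pencil (s : R) : tup R g (n + m) :=
  fun i => block_mx (X i) (s%:C *: pencil_defect i) 0 (Y i).

Lemma pencil0 : pencil 0 = dsum X Y.
Proof. by apply: funext => i; rewrite /pencil rmorph0 scale0r. Qed.

Lemma pencil_ur_entry (s : R) (i : 'I_g) (r : 'I_n) (c : 'I_m) :
  pencil s i (lshift m r) (rshift n c) = s%:C * pencil_defect i r c.
Proof. by rewrite /pencil block_mxEur mxE. Qed.

Lemma pencil_continuous : continuous pencil.
Proof.
apply: tup_continuous => i.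
have -> : (fun s => pencil s i) =
    (fun s : R => block_mx (X i) 0 0 (Y i)
                  + s%:C *: block_mx 0 (pencil_defect i) 0 0).
  apply: funext => s; rewrite /pencil scale_block_mx add_block_mx.
  by rewrite !scaler0 !addr0 add0r.
move=> s; apply: (@continuousD _ _ _ (fun=> _) (fun t : R => t%:C *: _)).
  exact: cst_continuous.
by apply: continuousZr_tmp; exact: realc_continuous.
Qed.

Lemma free_map_pencil (g' : nat) (U : forall k, set (tup R g k))
    (f : forall k, tup R g k -> tup R g' k) :
  free_map U f -> U n X -> U m Y -> intertwines (f n X) G (f m Y) ->
  forall s, U (n + m)%N (pencil s) ->
  f (n + m)%N (pencil s) = dsum (f n X) (f m Y).
Proof.
move=> f_free UX UY fXG_GfY s Us; apply: funext => i.
apply: (@intertwined_block_diag _ n m _ _ _ s%:C G (fXG_GfY i)).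
- by apply: (f_free _ _ _ _ _ Us UX) => j; exact: mul_ublock_col1.
- by apply: (f_free _ _ _ _ _ Us UY) => j; exact: mul_ublock_colZ.
Qed.

End Pencil.

Theorem proposition3p3 (R : realType) (g g' : nat)
  (U : forall n, set (tup R g n)) (f : forall n, tup R g n -> tup R g' n) :
  nc_domain U -> free_map U f ->
  forall (n m : nat) (X : tup R g n) (Y : tup R g m) (G : 'M[R[i]]_(n, m)),
    U n X -> U m Y ->
    intertwines (f n X) G (f m Y) ->
    (let S := [set Z | U (n + m)%N Z /\ f (n + m)%N Z = dsum (f n X) (f m Y)] in
     compact (closure S) /\ closure S `<=` U (n + m)%N) ->
    intertwines X G Y.
Proof.
move=> [[_ U_dsum] U_open_conn] f_free n m X Y G UX UY fXG_GfY.
set S := [set Z | _ /\ _] => -[S_compact S_in_U] i.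
have pencil_in_S s : closure S (pencil X Y G s).
  apply: (connected_continuous_trapped (V := U (n + m)%N) (t0 := 0)) => //.
  - by apply/connected_intervalP.
  - exact: pencil_continuous.
  - exact: (U_open_conn _).1.
  - exact: closed_closure.
  - move=> t Ut; apply: subset_closure; split=> //.
    exact: (free_map_pencil f_free UX UY fXG_GfY).
  - by rewrite pencil0; exact: U_dsum.
have : pencil_defect X Y G i = 0.
  apply/matrixP => r c; rewrite [RHS]mxE.
  pose entry (Z : tup R g (n + m)) := Z i (lshift m r) (rshift n c).
  apply: (@compact_complex_line_eq0 _ (entry @` closure S)).
    apply: continuous_compact => //; apply: continuous_subspaceT.
    exact: tup_entry_continuous.
  move=> s; exists (pencil X Y G s) => //.
  exact: pencil_ur_entry.
by move/eqP; rewrite subr_eq0 => /eqP ->.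
Qed.
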